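(* Fix $0<\delta<1$, and let $\epsilon=\frac12+\frac\delta2$, $\epsilon'=\frac12$, $c=\frac{4}{\epsilon-\epsilon'}=\frac{8}{\delta}$. For every even $n$, let $\mathcal M_n\subseteq\mathcal G_n$ be any subset with $|\mathcal M_n|\le 2^{\sqrt n}$ (and $\mathcal M_n=\emptyset$ for odd $n$). Then the hereditary closure of $\bigcup_{n\in\mathbb N}\mathcal M_n$ has at most factorial speed of growth, i.e. it contains at most $2^{O(n\log n)}$ graphs on vertex set $[n]$.
   Context: For even $n$, a good graph on $n$ vertices is a bipartite graph with vertex set $[n]$ and parts $\{1,\dots,\frac n2\}$ and $\{\frac n2+1,\dots,n\}$, having exactly $\lfloor(\frac n2)^{2-\epsilon}\rfloor$ edges, such that every induced subgraph with at most $(\frac n2)^{\epsilon'}$ vertices has a vertex of degree less than $c$ (within that subgraph). $\mathcal G_n$ denotes the set of good graphs on $n$ vertices (with $\epsilon,\epsilon',c$ as in the claim). The hereditary closure of a family $\mathcal M$ is the set of all graphs (on vertex sets $[k]$) isomorphic to an induced subgraph of some graph in $\mathcal M$. A family has at most factorial speed if the number of its members with vertex set $[n]$ is $2^{O(n\log n)}$. *)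

From mathcomp Require Import all_boot.
From Stdlib Require Import Reals ClassicalEpsilon.

Set Implicit Arguments.
Unset Strict Implicit.
Unset Printing Implicit Defensive.

(* A graph on vertex set [n] (represented by 'I_n = {0,...,n-1}) is given by
   its set of ordered adjacent pairs, required to be symmetric and irreflexive. *)
Definition graph (n : nat) := {set 'I_n * 'I_n}.

Definition is_graph (n : nat) (E : graph n) : bool :=
  [forall x : 'I_n, forall y : 'I_n, ((x, y) \in E) == ((y, x) \in E)]
  && [forall x : 'I_n, (x, x) \notin E].

Definition nedges (n : nat) (E : graph n) : nat :=
  #|[set p in E | (p.1 < p.2)%N]|.

Definition deg_in (n : nat) (E : graph n) (S : {set 'I_n}) (x : 'I_n) : nat :=
  #|[set y in S | (x, y) \in E]|.

(* real power x^y for x >= 0, with 0^y = 0 *)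
Definition rpow (x y : R) : R :=
  if Req_EM_T x 0 then 0%R else Rpower x y.

(* good graphs: vertex i (0-based) lies in the first part iff i < n/2 *)
Definition good (eps eps' c : R) (n : nat) (E : graph n) : Prop :=
  is_graph E /\
  (forall x y : 'I_n, (x, y) \in E -> (x < n./2)%N != (y < n./2)%N) /\
  (* exactly floor((n/2)^(2-eps)) edges *)
  (INR (nedges E) <= rpow (INR n / 2) (2 - eps) < INR (nedges E) + 1)%R /\
  (forall S : {set 'I_n}, (0 < #|S|)%N ->
     (INR #|S| <= rpow (INR n / 2) eps')%R ->
     exists2 x, x \in S & (INR (deg_in E S x) < c)%R).

Definition pbool (P : Prop) : bool :=
  if excluded_middle_informative P then true else false.

Definition in_hered_closure (M : forall m : nat, {set graph m})
  (k : nat) (H : graph k) : Prop :=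
  is_graph H /\
  exists m : nat, exists2 G : graph m, G \in M m &
    exists f : 'I_k -> 'I_m, injective f /\
      forall x y : 'I_k, ((x, y) \in H) = ((f x, f y) \in G).

Definition count_closure (M : forall m : nat, {set graph m}) (n : nat) : nat :=
  #|[set H : graph n | pbool (in_hered_closure M H)]|.

(* If m < 2n^2, H is determined by G and the map: at most 2n^2 * 2^(2n) * (2n^2)^n
   choices.  If m >= 2n^2, every set of at most n vertices of G has size at most
   (m/2)^(1/2), so goodness makes H D-degenerate for any integer D > c; repeatedly
   removing a vertex of degree < D shows H is determined by at most D chosen
   neighbours per vertex: at most (n+1)^(Dn) choices.  Both counts are n^O(n). *)

From mathcomp Require Import all_boot zify.
From Stdlib Require Import Reals Lra Psatz ClassicalEpsilon.
(* Stdlib rebinds [_ ^ _] on nat to [Nat.pow]; restore ssrnat's [expn]. *)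
Import ssrnat.

Set Implicit Arguments.
Unset Strict Implicit.

Lemma leq_exp2r_weak m n e : m <= n -> m ^ e <= n ^ e.
Proof. by case: e => [|e] le_mn; rewrite ?expn0 // leq_exp2r. Qed.

Lemma leq_card_bigcup (I T : finType) (P : pred I) (A : I -> {set T}) :
  #|\bigcup_(i | P i) A i| <= \sum_(i | P i) #|A i|.
Proof.
apply: (@big_ind2 {set T} nat (fun U s => #|U| <= s)) => [|U1 s1 U2 s2 h1 h2|//].
  by rewrite cards0.
exact: leq_trans (leq_card_setU _ _).1 (leq_add h1 h2).
Qed.

Lemma card_small_sets (T : finType) D : #|[set s : {set T} | #|s| <= D]| <= #|T|.+1 ^ D.
Proof.
pose set_of (g : {ffun 'I_D -> option T}) : {set T} := [set y | Some y \in codom g].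
apply: (@leq_trans #|[set set_of g | g in [set: {ffun 'I_D -> option T}]]|).
  apply/subset_leq_card/subsetP => s; rewrite inE => hs; apply/imsetP.
  exists [ffun i : 'I_D => nth None [seq Some y | y <- enum s] i]; first by rewrite inE.
  apply/setP => y; rewrite inE; apply/idP/codomP => [ys|[i]].
    have hi : index y (enum s) < D.
      by apply: leq_trans hs; rewrite cardE index_mem mem_enum.
    exists (Ordinal hi); rewrite ffunE /= (nth_map y) ?index_mem ?mem_enum //.
    by rewrite nth_index // mem_enum.
  rewrite ffunE; case: (ltnP i (size (enum s))) => hi.
    by rewrite (nth_map y) // => -[->]; rewrite -mem_enum mem_nth.
  by rewrite nth_default // size_map.
by apply: leq_trans (leq_imset_card _ _) _; rewrite cardsT card_ffun card_option card_ord.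
Qed.

Lemma is_graph_sym n (H : graph n) :
  is_graph H -> forall x y, ((x, y) \in H) = ((y, x) \in H).
Proof. by case/andP => /forallP hs _ x y; apply/eqP; apply: (forallP (hs x)). Qed.

Definition nbhd_graph n (N : {ffun 'I_n -> {set 'I_n}}) : graph n :=
  [set p | (p.2 \in N p.1) || (p.1 \in N p.2)].

Lemma card_nbhd_graphs n D :
  #|[set nbhd_graph N | N in ffun_on (mem [set s : {set 'I_n} | #|s| <= D])]|
    <= (n.+1 ^ D) ^ n.
Proof.
apply: leq_trans (leq_imset_card _ _) _; rewrite card_ffun_on card_ord.
by apply: leq_exp2r_weak; have := card_small_sets 'I_n D; rewrite card_ord.
Qed.

Section Degenerate.

Variables (n D : nat) (H : graph n).
Hypothesis H_sym : forall x y, ((x, y) \in H) = ((y, x) \in H).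
Hypothesis H_degenerate : forall S : {set 'I_n}, 0 < #|S| ->
  exists2 x, x \in S & deg_in H S x < D.

(* Remove a vertex x of small degree from S and let x choose all its neighbours in S. *)
Lemma degenerate_choice_on k (S : {set 'I_n}) : #|S| = k ->
  exists N : 'I_n -> {set 'I_n},
    [/\ forall x, #|N x| <= D, forall x, N x \subset S &
        forall x y, x \in S -> y \in S -> ((x, y) \in H) = (y \in N x) || (x \in N y)].
Proof.
elim: k S => [|k IH] S hS.
  exists (fun _ => set0); split=> [x|x|x y]; rewrite ?cards0 ?sub0set //.
  by rewrite (cards0_eq hS) inE.
have [x xS dx] : exists2 x, x \in S & deg_in H S x < D by apply: H_degenerate; rewrite hS.
have hS' : #|S :\ x| = k by move: hS; rewrite (cardsD1 x) xS add1n => -[].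
have [N' [N'_card N'_sub N'_edges]] := IH _ hS'.
have xN' y : x \in N' y = false.
  by apply/negbTE/negP => /(subsetP (N'_sub y)); rewrite !inE eqxx.
exists (fun z => if z == x then [set y in S | (x, y) \in H] else N' z); split.
- by move=> z; case: ifP => _ //; apply: ltnW.
- move=> z; case: ifP => _; first by apply/subsetP => y; rewrite inE => /andP[].
  exact: subset_trans (N'_sub z) (subD1set _ _).
- move=> a b aS bS.
  case: (eqVneq a x) => [->|ax]; case: (eqVneq b x) => [->|bx].
  + by rewrite inE xS /= orbb.
  + by rewrite xN' orbF inE bS.
  + by rewrite xN' /= inE aS /= H_sym.
  + by apply: N'_edges; rewrite !inE ?ax ?bx.
Qed.

Lemma degenerate_nbhd_graph :
  exists2 N : {ffun 'I_n -> {set 'I_n}},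
    N \in ffun_on (mem [set s : {set 'I_n} | #|s| <= D]) & H = nbhd_graph N.
Proof.
have [N [N_card _ N_edges]] := @degenerate_choice_on _ [set: 'I_n] erefl.
exists [ffun z => N z]; first by apply/ffun_onP => x; rewrite ffunE inE.
by apply/setP => -[a b]; rewrite inE /= !ffunE; apply: N_edges.
Qed.

End Degenerate.

Definition induced n m (G : graph m) (f : 'I_n -> 'I_m) : graph n :=
  [set q | (f q.1, f q.2) \in G].

Lemma deg_in_induced n m (G : graph m) (f : 'I_n -> 'I_m) (S : {set 'I_n}) x :
  injective f -> deg_in (induced G f) S x = deg_in G (f @: S) (f x).
Proof.
move=> f_inj; rewrite /deg_in -(card_imset _ f_inj); apply: eq_card => w.
rewrite [in RHS]inE; apply/imsetP/andP => [[y]|[/imsetP[y yS ->] hxy]].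
  by rewrite !inE => /andP[yS hxy] ->; rewrite imset_f.
by exists y; rewrite // !inE yS.
Qed.

Section ClosureCount.

Variables (M : forall m, {set graph m}) (n D B : nat).
Hypothesis small_hosts_few : forall m, m < 2 * n * n -> #|M m| <= B.
Hypothesis large_hosts_sparse : forall m (G : graph m), 2 * n * n <= m -> G \in M m ->
  forall S : {set 'I_m}, 0 < #|S| <= n -> exists2 x, x \in S & deg_in G S x < D.

Let degenerate_graphs :=
  [set nbhd_graph N | N in ffun_on (mem [set s : {set 'I_n} | #|s| <= D])].

Let small_host_graphs := \bigcup_(m < 2 * n * n)
  [set induced p.1 p.2 | p : graph m * {ffun 'I_n -> 'I_m}
                        in setX (M m) [set: {ffun 'I_n -> 'I_m}]].

Lemma closure_sub_degenerate_or_small_host :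
  [set H : graph n | pbool (in_hered_closure M H)]
    \subset degenerate_graphs :|: small_host_graphs.
Proof.
apply/subsetP => H; rewrite inE /pbool.
case: excluded_middle_informative => [[H_graph [m [G GM [f [f_inj H_f]]]]] _|//].
have H_ind : H = induced G f by apply/setP => -[a b]; rewrite inE H_f.
rewrite inE; apply/orP; case: (ltnP m (2 * n * n)) => hm; [right|left].
  apply/bigcupP; exists (Ordinal hm) => //; apply/imsetP.
  exists (G, [ffun x => f x]); first by rewrite in_setX GM in_setT.
  by rewrite H_ind; apply/setP => -[a b]; rewrite !inE /= !ffunE.
have [S S0|N N_small ->] := @degenerate_nbhd_graph n D H (is_graph_sym H_graph).
  have fS : 0 < #|f @: S| <= n.
    by rewrite card_imset // S0 /=; apply: leq_trans (max_card _) _; rewrite card_ord.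
  have [_ /imsetP[x xS ->] dx] := large_hosts_sparse hm GM fS.
  by exists x; rewrite // H_ind deg_in_induced.
by apply/imsetP; exists N.
Qed.

Lemma count_closure_le :
  count_closure M n <= (n.+1 ^ D) ^ n + 2 * n * n * (B * (2 * n * n) ^ n).
Proof.
apply: leq_trans (subset_leq_card closure_sub_degenerate_or_small_host) _.
apply: leq_trans (leq_card_setU _ _).1 (leq_add (card_nbhd_graphs n D) _).
apply: leq_trans (leq_card_bigcup _ _) _.
rewrite -[X in _ <= X * _]card_ord -sum_nat_const.
apply: leq_sum => m _; apply: leq_trans (leq_imset_card _ _) _.
rewrite cardsX cardsT card_ffun !card_ord.
exact: leq_mul (small_hosts_few (ltn_ord m)) (leq_exp2r_weak _ (ltnW (ltn_ord m))).
Qed.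

End ClosureCount.

Lemma count_bound_le_expn n D : 2 <= n ->
  (n.+1 ^ D) ^ n + 2 * n * n * (4 ^ n * (2 * n * n) ^ n) <= n ^ (2 * ((D + 6) * n)).
Proof.
move=> n_ge2; rewrite expnM -mulnn; set q := n * n.
have q_gt0 : 0 < q by rewrite /q; nia.
have degenerate_le : (n.+1 ^ D) ^ n <= q ^ ((D + 5) * n).
  rewrite -expnM; apply: leq_trans (leq_exp2r_weak _ (_ : n.+1 <= q)) _.
    by rewrite /q; nia.
  by apply: leq_pexp2l => //; nia.
have small_host_le : 2 * n * n * (4 ^ n * (2 * n * n) ^ n) <= q ^ ((D + 5) * n).
  have two_q_le : 2 * n * n <= q * q by rewrite /q; nia.
  have four_le : 4 <= q by rewrite /q; nia.
  apply: leq_trans (leq_mul two_q_le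
    (leq_mul (leq_exp2r_weak n four_le) (leq_exp2r_weak n two_q_le))) _.
  have -> : q * q * (q ^ n * (q * q) ^ n) = q ^ (n + n + n + 2).
    by rewrite expnMn !expnD expnS expn1; nia.
  by apply: leq_pexp2l => //; nia.
apply: leq_trans (leq_add degenerate_le small_host_le) _.
rewrite addnn -mul2n; apply: leq_trans (leq_mul (_ : 2 <= q) (leqnn _)) _.
  by rewrite /q; nia.
by rewrite -expnS leq_pexp2l //; nia.
Qed.

Lemma INR_expn a b : INR (a ^ b) = (INR a ^ b)%R.
Proof. by elim: b => [|b IH]; rewrite ?expn0 // expnS mulnE mult_INR IH. Qed.

Lemma Rpower2_sqrt_le_expn4 m n : m <= 4 * n * n ->
  (Rpower 2 (sqrt (INR m)) <= INR (4 ^ n))%R.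
Proof.
move=> m_le; rewrite INR_expn.
have -> : (INR 4 ^ n = Rpower 2 (INR (2 * n)))%R.
  by rewrite Rpower_pow; [rewrite mulnE pow_mult; f_equal; simpl; lra | lra].
apply: Rle_Rpower; first lra.
rewrite -(sqrt_pow2 (INR (2 * n))); last exact: pos_INR.
apply: sqrt_le_1_alt.
have := le_INR _ _ (leP m_le); rewrite !mulnE !mult_INR; simpl; nra.
Qed.

Lemma INR_le_rpow_half_sqrt k m : 2 * k * k <= m -> (INR k <= rpow (INR m / 2) (1/2))%R.
Proof.
move=> km; have := le_INR _ _ (leP km); rewrite !mulnE !mult_INR /rpow; simpl => kmR.
have k_ge0 := pos_INR k.
case: Req_EM_T => [m0|m0] /=.
  have m_eq0 : INR m = 0%R by lra.
  nra.
have m_pos : (0 < INR m / 2)%R by have := pos_INR m; case: (Rdichotomy _ _ m0); lra.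
rewrite (_ : 1/2 = /2)%R ?Rpower_sqrt //; last lra.
rewrite -(sqrt_pow2 (INR k)) //; apply: sqrt_le_1_alt; nra.
Qed.

Lemma good_small_sets_sparse eps c D m (G : graph m) (S : {set 'I_m}) k :
  good eps (1/2) c G -> (c < INR D)%R -> 2 * k * k <= m -> 0 < #|S| <= k ->
  exists2 x, x \in S & deg_in G S x < D.
Proof.
move=> [_ [_ [_ sparse]]] cD km /andP[S0 Sk].
have [|x xS dx] := sparse S S0.
  apply: Rle_trans (INR_le_rpow_half_sqrt km).
  by apply: le_INR; apply/leP.
by exists x => //; apply/ltP; apply: INR_lt; lra.
Qed.

Theorem claim3p1 (delta : R) (hd0 : (0 < delta)%R) (hd1 : (delta < 1)%R)
  (M : forall m : nat, {set graph m})
  (hodd : forall n : nat, odd n -> M n = set0)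
  (hgood : forall n : nat, ~~ odd n -> forall G, G \in M n ->
     good (1/2 + delta/2) (1/2) (4 / ((1/2 + delta/2) - 1/2)) G)
  (hsize : forall n : nat, ~~ odd n ->
     (INR #|M n| <= Rpower 2 (sqrt (INR n)))%R) :
  exists C : R, exists N : nat, forall n : nat, (N <= n)%N ->
    (INR (count_closure M n) <= Rpower 2 (C * INR n * ln (INR n)))%R.
Proof.
have [D cD] := INR_unbounded (4 / ((1/2 + delta/2) - 1/2)).
exists (2 * INR (D + 6) / ln 2)%R, 2 => n n_ge2.
have small_hosts_few m : m < 2 * n * n -> #|M m| <= 4 ^ n.
  move=> hm; case: (boolP (odd m)) => om; first by rewrite hodd // cards0.
  apply/leP/INR_le; apply: Rle_trans (hsize m om) (Rpower2_sqrt_le_expn4 _).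
  by apply: ltnW; apply: leq_trans hm _; nia.
have large_hosts_sparse m (G : graph m) : 2 * n * n <= m -> G \in M m ->
    forall S : {set 'I_m}, 0 < #|S| <= n -> exists2 x, x \in S & deg_in G S x < D.
  move=> hm GM S; apply: good_small_sets_sparse cD hm.
  have even_m : ~~ odd m by apply/negP => om; move: GM; rewrite hodd // inE.
  exact: hgood GM.
have count_le := leq_trans (count_closure_le small_hosts_few large_hosts_sparse)
  (count_bound_le_expn D n_ge2).
have n_gt0 : (0 < INR n)%R by apply: lt_0_INR; apply/ltP; lia.
apply: Rle_trans (le_INR _ _ (leP count_le)) _.
rewrite INR_expn -Rpower_pow // /Rpower; apply: Req_le; f_equal.
have := ln_lt_2; rewrite !mulnE !mult_INR; simpl INR => ln2; field; lra.
Qed.
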